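(* Let $G$ be a group with finite symmetric generating set $Z$, let $X,Y$ be finite sets equipped with maps to $G$, and let $K\ge0$. Then the set $$\mathcal{M}=\{(U,V)\in B^*\mid (U,V)\text{ is a } K\text{-synchronous BCD pair in }(G,d_Z)\}$$ is a regular language over the alphabet $B$.
   Context: Elements of $X$ and $Y$ are regarded as elements of $G$ via the given maps. Let $\$_X\notin X$, $\$_Y\notin Y$ be padding symbols interpreted as the identity of $G$, $X^{\$}=X\cup\{\$_X\}$, $Y^{\$}=Y\cup\{\$_Y\}$ and $B=X^{\$}\times Y^{\$}$ (a finite alphabet). A word over $B$ is written $(U,V)$ with $U\in(X^{\$})^*$, $V\in(Y^{\$})^*$ of the same length. For a word $W$, $W_j$ is its prefix of length $j$ ($W_j=W$ if $j>\ell(W)$). $(U,V)\in B^*$ is a $K$-synchronous BCD pair in $(G,d_Z)$ if there exists $g\in G$ with $|g|_Z\le K$ such that $gU=_GVg$ and $|V_j^{-1}gU_j|_Z\le K$ for all $j=0,1,2,\dots$. *)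

From HB Require Import structures.
From mathcomp Require Import ssreflect ssrfun ssrbool eqtype ssrnat seq choice.
From mathcomp Require Import fintype bigop monoid.

Set Implicit Arguments.
Unset Strict Implicit.
Unset Printing Implicit Defensive.

Local Open Scope group_scope.

Section Defs.
Variable G : groupType.

Definition gprod (s : seq G) : G := \prod_(x <- s) x.

Definition symmetric_set (Z : seq G) : Prop :=
  forall z, z \in Z -> z^-1 \in Z.

Definition generates (Z : seq G) : Prop :=
  forall g : G, exists s : seq G,
    all (fun x => (x \in Z) || (x^-1 \in Z)) s /\ g = gprod s.

Definition wlen_le (Z : seq G) (g : G) (K : nat) : Prop :=
  exists s : seq G, all (fun x => x \in Z) s /\ size s <= K /\ gprod s = g.

(* letters of X^$ = option X, with None the padding symbol $_X interpreted as 1 *)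
Definition letter (X : Type) (f : X -> G) (a : option X) : G :=
  if a is Some x then f x else 1.

Definition evalw (X : Type) (f : X -> G) (U : seq (option X)) : G :=
  gprod (map (letter f) U).

(* (U,V) in B^*, B = X^$ * Y^$, given as a word w : seq B with U = map fst w,
   V = map snd w; prefixes W_j = take j W. *)
Definition sync_BCD_pair (Z : seq G) (X Y : Type) (fX : X -> G) (fY : Y -> G)
    (K : nat) (w : seq (option X * option Y)) : Prop :=
  let U := map fst w in
  let V := map snd w in
  exists g : G,
    [/\ wlen_le Z g K,
        g * evalw fX U = evalw fY V * g &
        forall j : nat,
          wlen_le Z ((evalw fY (take j V))^-1 * g * evalw fX (take j U)) K].

End Defs.

Definition regular_language (A : finType) (L : seq A -> Prop) : Prop :=
  exists (S : finType) (s0 : S) (delta : S -> A -> S) (F : pred S),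
    forall w : seq A, L w <-> F (foldl delta s0 w).

From HB Require Import structures.
From mathcomp Require Import ssreflect ssrfun ssrbool eqtype ssrnat seq choice.
From mathcomp Require Import fintype bigop monoid finfun.

(* The ball of radius K of d_Z is a finite subset of G.  Along a word, the
   elements h_j = V_j^-1 g U_j obey h_(j+1) = y^-1 h_j x for the letter (x, y),
   so for a fixed g the pair is K-synchronous exactly when the partial
   deterministic automaton on the ball that performs these moves, started at g,
   never leaves the ball and ends at g.  Guessing g is then handled by running
   one copy of that automaton per ball element in parallel. *)

Set Implicit Arguments.
Unset Strict Implicit.
Unset Printing Implicit Defensive.

Local Open Scope group_scope.

Lemma regular_language_ext (A : finType) (L1 L2 : seq A -> Prop) :
  (forall w, L1 w <-> L2 w) -> regular_language L1 -> regular_language L2.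
Proof.
move=> L12 [S [s0 [delta [F accF]]]].
by exists S, s0, delta, F => w; split=> [/L12/accF | /accF/L12].
Qed.

Section PartialRuns.
Variables (A S : Type) (step : S -> A -> option S).

Definition prun (s : S) (w : seq A) : option S :=
  foldl (fun o a => obind (step^~ a) o) (Some s) w.

Lemma foldl_obind_None w : foldl (fun o a => obind (step^~ a) o) None w = None.
Proof. by elim: w. Qed.

End PartialRuns.

Lemma regular_prun (A S : finType) (step : S -> A -> option S)
    (accept : S -> option S -> bool) :
  regular_language (fun w => [exists s, accept s (prun step s w)]).
Proof.
pose delta (r : {ffun S -> option S}) a := [ffun s => obind (step^~ a) (r s)].
have runE w r : foldl delta r w = [ffun s => foldl (fun o a => obind (step^~ a) o) (r s) w].
  elim: w r => [|a w IHw] r /=; first by apply/ffunP => s; rewrite ffunE.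
  by rewrite IHw; apply/ffunP => s; rewrite !ffunE.
exists {ffun S -> option S}, [ffun s => Some s], delta,
  (fun r : {ffun S -> option S} => [exists s, accept s (r s)]) => w.
rewrite runE; split=> /existsP [s]; rewrite ?ffunE => acc;
  by apply/existsP; exists s; rewrite ?ffunE.
Qed.

Section SubtypeRuns.
Variables (T A : Type) (P : pred T) (S : subType P) (f : T -> A -> T).

Lemma prun_insub (x y : S) (w : seq A) :
  prun (fun s a => insub (f (val s) a)) x w = Some y <->
  (forall j, P (foldl f (val x) (take j w))) /\ val y = foldl f (val x) w.
Proof.
elim: w x => [|a w IHw] x /=.
  split=> [[<-] | [_ /val_inj ->]] //; by split=> // j; apply: valP.
rewrite /prun /=; case: (insubP S (f (val x) a)) => [u Pu valu | notP]; last first.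
  rewrite foldl_obind_None; split=> // [[/(_ 1%N) /=]]; rewrite take0 /=.
  by move/negP: notP.
apply: iff_trans (IHw u) _; rewrite valu.
split=> [] [inP ->]; split=> // j.
- by case: j => [|j] /=; [apply: valP | apply: inP].
- exact: (inP j.+1).
Qed.

End SubtypeRuns.

Lemma gprod_nil (G : groupType) : gprod ([::] : seq G) = 1.
Proof. by rewrite /gprod big_nil. Qed.

Lemma gprod_cons (G : groupType) (x : G) s : gprod (x :: s) = x * gprod s.
Proof. by rewrite /gprod big_cons. Qed.

Section Ball.
Variables (G : groupType) (Z : seq G).

Fixpoint ball (K : nat) : seq G :=
  if K is K'.+1 then 1 :: [seq z * g | z <- Z, g <- ball K'] else [:: 1].

Lemma ballP (K : nat) (g : G) : reflect (wlen_le Z g K) (g \in ball K).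
Proof.
apply: (iffP idP); elim: K g => [|K IHK] g /=.
- by rewrite inE => /eqP ->; exists [::]; rewrite gprod_nil.
- rewrite inE => /orP [/eqP -> | /allpairsP [[z h] [/= Zz /IHK [s [Zs [sizes <-]]] ->]]].
    by exists [::]; rewrite gprod_nil.
  by exists (z :: s); rewrite /= Zz Zs gprod_cons.
- by case=> [[|z s]] [_ []] //= _ <-; rewrite gprod_nil inE.
case=> [[|z s] [/= Zs [sizes <-]]]; rewrite inE ?gprod_nil ?eqxx //.
apply/orP; right; apply/allpairsP; exists (z, gprod s).
move: Zs => /andP [Zz Zs]; rewrite gprod_cons; split=> //.
by apply: IHK; exists s.
Qed.

End Ball.

Section Drift.
Variables (G : groupType) (X Y : Type) (fX : X -> G) (fY : Y -> G).

Definition drift1 (g : G) (a : option X * option Y) : G :=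
  (letter fY a.2)^-1 * g * letter fX a.1.

Definition drift (w : seq (option X * option Y)) (g : G) : G := foldl drift1 g w.

Lemma driftE w g :
  drift w g = (evalw fY (map snd w))^-1 * g * evalw fX (map fst w).
Proof.
rewrite /evalw; elim: w g => [|a w IHw] g /=.
  by rewrite gprod_nil invg1 mul1g mulg1.
by rewrite /drift /= -/(drift w _) IHw !gprod_cons invgM !mulgA.
Qed.

Lemma drift_fixed w g :
  drift w g = g <-> g * evalw fX (map fst w) = evalw fY (map snd w) * g.
Proof.
rewrite driftE -mulgA; split=> [fixed | ->]; last by rewrite mulKg.
by rewrite -[in RHS]fixed mulVKg.
Qed.

End Drift.

Section SynchronousPairs.
Variables (G : groupType) (Z : seq G) (X Y : Type) (fX : X -> G) (fY : Y -> G).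
Variable K : nat.

Definition bcd_step (h : seq_sub (ball Z K)) (a : option X * option Y) :
    option (seq_sub (ball Z K)) :=
  insub (drift1 fX fY (val h) a).

Lemma sync_BCD_pair_prun w :
  sync_BCD_pair Z fX fY K w <-> [exists h, prun bcd_step h w == Some h].
Proof.
have prefixE j g : (evalw fY (take j (map snd w)))^-1 * g * evalw fX (take j (map fst w))
    = drift fX fY (take j w) g by rewrite driftE !map_take.
split=> [[g [/ballP g_ball fixed prefixes]] | /existsP [h /eqP /prun_insub [inball fixed]]].
  apply/existsP; exists (SeqSub g_ball); apply/eqP/prun_insub; split=> /= [j|].
    by apply/ballP; have := prefixes j; rewrite prefixE.
  by apply/esym/drift_fixed.
exists (val h); split; first exact/ballP/valP.
- by apply/drift_fixed/esym.
- by move=> j; rewrite prefixE; apply/ballP/inball.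
Qed.

End SynchronousPairs.

Theorem lemma5p11 (G : groupType) (Z : seq G)
    (hsym : symmetric_set Z) (hgen : generates Z)
    (X Y : finType) (fX : X -> G) (fY : Y -> G) (K : nat) :
  regular_language
    (fun w : seq (option X * option Y) => sync_BCD_pair Z fX fY K w).
Proof.
apply: regular_language_ext (regular_prun (@bcd_step G Z X Y fX fY K)
  (fun h o => o == Some h)) => w.
exact: iff_sym (sync_BCD_pair_prun Z fX fY K w).
Qed.
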